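(* Let $\mathbf{z}:\mathcal{U}\to\mathcal{Z}$ be a $C^1$ diffeomorphism onto a convex set $\mathcal{Z}$ with inverse $\mathbf{z}\mapsto\mathbf{u}(\mathbf{z})$, and let $\Phi(s;\mathbf{u}_L,\mathbf{u}_R):=\mathbf{u}\big(\mathbf{z}_L+s[\![\mathbf{z}]\!]\big)$ be the path that is linear in $\mathbf{z}$. Let $\bar{\mathbf{B}}^\pm:\mathcal{U}\times\mathcal{U}\to\mathbb{R}^{n\times n}$ be $C^1$ with (a) $2\bar{\mathbf{B}}^\pm(\mathbf{u},\mathbf{u})=\mathbf{B}(\mathbf{u})\,\mathbf{u}_{\mathbf{z}}(\mathbf{z}(\mathbf{u}))$; (b) $\bar{\mathbf{B}}^-(\mathbf{u}_R,\mathbf{u}_L)=\bar{\mathbf{B}}^+(\mathbf{u}_L,\mathbf{u}_R)$; (c) $\bar{\mathbf{B}}^-(\mathbf{u}_L,\mathbf{u}_R)+\bar{\mathbf{B}}^+(\mathbf{u}_L,\mathbf{u}_R)=\int_0^1\mathbf{B}(\Phi(s))\,\mathbf{u}_{\mathbf{z}}(\mathbf{z}_L+s[\![\mathbf{z}]\!])\,ds$; and let $\mathbf{f}^*:\mathcal{U}\times\mathcal{U}\to\mathbb{R}^n$ be $C^1$, consistent ($\mathbf{f}^*(\mathbf{u},\mathbf{u})=\mathbf{f}(\mathbf{u})$) and symmetric ($\mathbf{f}^*(\mathbf{u}_L,\mathbf{u}_R)=\mathbf{f}^*(\mathbf{u}_R,\mathbf{u}_L)$), such that for all $\mathbf{u}_L,\mathbf{u}_R$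 (d) $[\![q-\mathbf{w}^T\mathbf{f}]\!]=\mathbf{w}_R^T\bar{\mathbf{B}}^+(\mathbf{u}_L,\mathbf{u}_R)[\![\mathbf{z}]\!]+\mathbf{w}_L^T\bar{\mathbf{B}}^-(\mathbf{u}_L,\mathbf{u}_R)[\![\mathbf{z}]\!]-[\![\mathbf{w}]\!]^T\mathbf{f}^*(\mathbf{u}_L,\mathbf{u}_R)$. Then the fluctuations $$\mathbf{D}^-(\mathbf{u}_L,\mathbf{u}_R)=\bar{\mathbf{B}}^-(\mathbf{u}_L,\mathbf{u}_R)[\![\mathbf{z}]\!]+\mathbf{f}^*(\mathbf{u}_L,\mathbf{u}_R)-\mathbf{f}(\mathbf{u}_L),\qquad \mathbf{D}^+(\mathbf{u}_L,\mathbf{u}_R)=\bar{\mathbf{B}}^+(\mathbf{u}_L,\mathbf{u}_R)[\![\mathbf{z}]\!]+\mathbf{f}(\mathbf{u}_R)-\mathbf{f}^*(\mathbf{u}_L,\mathbf{u}_R)$$ are entropy conservative fluctuations, i.e. satisfy (C1)–(C5) with respect to the path $\Phi$.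
   Context: System: $\mathbf{u}_t+\mathbf{f}(\mathbf{u})_x+\mathbf{B}(\mathbf{u})\mathbf{u}_x=0$, $\mathbf{u}\in\mathcal{U}\subset\mathbb{R}^n$, with $C^1$ flux $\mathbf{f}$ and continuous $\mathbf{B}$, generalized Jacobian $\mathbf{A}:=\mathbf{f}_{\mathbf{u}}+\mathbf{B}$. Entropy pair: strictly convex $C^2$ $S$ and entropy flux $q$ with $q_{\mathbf{u}}=\mathbf{w}^T(\mathbf{f}_{\mathbf{u}}+\mathbf{B})$, $\mathbf{w}(\mathbf{u}):=S_{\mathbf{u}}(\mathbf{u})$. Notation: $[\![\cdot]\!]=(\cdot)_R-(\cdot)_L$; $\mathbf{w}_L=\mathbf{w}(\mathbf{u}_L)$, $\mathbf{z}_L=\mathbf{z}(\mathbf{u}_L)$, $q_L=q(\mathbf{u}_L)$, etc. EC fluctuation conditions, for all $\mathbf{u},\mathbf{u}_L,\mathbf{u}_R$ and a given family of paths $\Phi(s;\mathbf{u}_L,\mathbf{u}_R)$: (C1) $\mathbf{D}^\pm(\mathbf{u},\mathbf{u})=0$; (C2) $\mathbf{D}^-(\mathbf{u}_L,\mathbf{u}_R)+\mathbf{D}^+(\mathbf{u}_L,\mathbf{u}_R)=\int_0^1\mathbf{A}(\Phi(s;\mathbf{u}_L,\mathbf{u}_R))\partial_s\Phi(s;\mathbf{u}_L,\mathbf{u}_R)\,ds$; (C3) $\mathbf{D}^-(\mathbf{u}_L,\mathbf{u}_R)+\mathbf{D}^+(\mathbf{u}_R,\mathbf{u}_L)=0$;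 (C4) $\mathbf{w}_L^T\mathbf{D}^-(\mathbf{u}_L,\mathbf{u}_R)+\mathbf{w}_R^T\mathbf{D}^+(\mathbf{u}_L,\mathbf{u}_R)=q_R-q_L$; (C5) $\frac{\partial\mathbf{D}^-(\mathbf{u}_L,\mathbf{u}_R)}{\partial\mathbf{u}_R}\big|_{\mathbf{u}_R=\mathbf{u}_L}=\frac12\mathbf{A}(\mathbf{u}_L)$. *)

From HB Require Import structures.
From mathcomp Require Import all_boot all_order all_algebra.
From mathcomp Require Import all_classical all_reals all_analysis.
Set Implicit Arguments. Unset Strict Implicit. Unset Printing Implicit Defensive.
Import Order.TTheory GRing.Theory Num.Theory.
Import numFieldNormedType.Exports.
Local Open Scope classical_set_scope.
Local Open Scope ring_scope.

(** Vectors of R^n are column vectors 'cV[R]_n; e_j := delta_mx j 0. *)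

Definition dotv {R : realType} {n : nat} (a b : 'cV[R]_n) : R :=
  \sum_(i < n) a i 0 * b i 0.

Definition jac {R : realType} {n m : nat} (g : 'cV[R]_n -> 'cV[R]_m)
  (u : 'cV[R]_n) : 'M[R]_(m, n) :=
  \matrix_(i < m, j < n) ('D_(delta_mx j 0) g u) i 0.

Definition grad {R : realType} {n : nat} (g : 'cV[R]_n -> R^o)
  (u : 'cV[R]_n) : 'cV[R]_n :=
  \col_(j < n) ('D_(delta_mx j 0) g u).

Definition C1_on {R : realType} {V W : normedModType R} (D : set V)
  (g : V -> W) : Prop :=
  (forall x, D x -> differentiable g x) /\
  (forall v x, D x -> {for x, continuous ('D_v g)}).

Definition C2_on {R : realType} {V W : normedModType R} (D : set V)
  (g : V -> W) : Prop :=
  C1_on D g /\ (forall v, C1_on D ('D_v g)).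

Definition convex_set_ {R : realType} {n : nat} (Z : set 'cV[R]_n) : Prop :=
  forall a b t, Z a -> Z b -> 0 <= t <= 1 -> Z (a + t *: (b - a)).

Definition strictly_convex_on {R : realType} {n : nat} (U : set 'cV[R]_n)
  (S : 'cV[R]_n -> R) : Prop :=
  forall a b t, U a -> U b -> a != b -> 0 < t < 1 ->
    U ((1 - t) *: a + t *: b) ->
    S ((1 - t) *: a + t *: b) < (1 - t) * S a + t * S b.

Definition int01 {R : realType} (g : R -> R) : R :=
  Rintegral (@lebesgue_measure R) `[0%R, 1%R] g.

Definition mint01 {R : realType} {m n : nat} (F : R -> 'M[R]_(m, n)) : 'M[R]_(m, n) :=
  \matrix_(i < m, j < n) int01 (fun s => F s i j).

Definition zpath {R : realType} {n : nat} (z uz : 'cV[R]_n -> 'cV[R]_n)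
  (uL uR : 'cV[R]_n) (s : R) : 'cV[R]_n :=
  uz (z uL + s *: (z uR - z uL)).

Definition Dminus {R : realType} {n : nat} (z f : 'cV[R]_n -> 'cV[R]_n)
  (Bm : 'cV[R]_n -> 'cV[R]_n -> 'M[R]_n)
  (fs : 'cV[R]_n -> 'cV[R]_n -> 'cV[R]_n) (uL uR : 'cV[R]_n) : 'cV[R]_n :=
  Bm uL uR *m (z uR - z uL) + fs uL uR - f uL.

Definition Dplus {R : realType} {n : nat} (z f : 'cV[R]_n -> 'cV[R]_n)
  (Bp : 'cV[R]_n -> 'cV[R]_n -> 'M[R]_n)
  (fs : 'cV[R]_n -> 'cV[R]_n -> 'cV[R]_n) (uL uR : 'cV[R]_n) : 'cV[R]_n :=
  Bp uL uR *m (z uR - z uL) + f uR - fs uL uR.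

From HB Require Import structures.
From mathcomp Require Import all_boot all_order all_algebra.
From mathcomp Require Import all_classical all_reals all_analysis.
From mathcomp Require Import ring lra.
Import Order.TTheory GRing.Theory Num.Theory.
Import numFieldNormedType.Exports.
Local Open Scope classical_set_scope.
Local Open Scope ring_scope.

(* Let [dz = z_R - z_L]. (C1), (C3) and (C4) are algebraic consequences of
   the consistency and symmetry of f^*, of (b) and of (d).  For (C2), the path
   linear in z has velocity [u_z(z_L + s dz) dz], so A(Phi) Phi' splits into
   [d/ds f(Phi(s))], which integrates to [[f]], and [B(Phi) u_z dz], which
   integrates to [(B^- + B^+) dz] by (c).  For (C5), the factor [z(u_R) - z(u_L)]
   vanishes at [u_R = u_L], so the product rule leaves [B^-(u,u) z_u = B/2]
   by (a) and [u_z z_u = I]; consistency and symmetry force the partial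
   derivative of f^* in either argument to be [f_u / 2]. *)

Lemma mulmx_entry_sum {R : realType} {T : Type} m p k (M : T -> 'M[R]_(m, p))
    (N : T -> 'M[R]_(p, k)) i j :
  (fun y => (M y *m N y) i j) = \sum_(l < p) (fun y => M y i l * N y l j).
Proof. by apply/funext => y; rewrite fct_sumE mxE. Qed.

Lemma entry_col {R : realType} m k (A : 'M[R]_(m, k)) i j : A i j = col j A i 0.
Proof. by rewrite mxE. Qed.

Section matrix_derivative.
Context {R : realType} {V : normedModType R}.

Lemma differentiable_mxP m k (M : V -> 'M[R]_(m, k)) x :
  differentiable M x <-> forall i j, differentiable (fun y => M y i j) x.
Proof.
split=> [dM i j|dMij].
  apply: (@differentiable_comp _ _ _ _ M (fun N : 'M[R]_(m, k) => N i j)) => //.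
  exact: differentiable_coord.
have -> : M = \sum_(i < m) (fun y => \sum_(j < k) M y i j *: delta_mx i j).
  by apply/funext => y; rewrite fct_sumE; apply: matrix_sum_delta.
apply: differentiable_sum => i.
rewrite -(fct_sumE _ _ (fun j y => M y i j *: delta_mx i j)).
by apply: differentiable_sum => j; apply: differentiableZl.
Qed.

Lemma differentiable_mulmx m p k (M : V -> 'M[R]_(m, p)) (N : V -> 'M[R]_(p, k)) x :
  differentiable M x -> differentiable N x ->
  differentiable (fun y => M y *m N y) x.
Proof.
move=> /differentiable_mxP dM /differentiable_mxP dN.
apply/differentiable_mxP => i j; rewrite mulmx_entry_sum.
by apply: differentiable_sum => l; apply: differentiableM.
Qed.

Lemma derive_mulmx m p k (M : V -> 'M[R]_(m, p)) (N : V -> 'M[R]_(p, k)) x v :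
  derivable M x v -> derivable N x v ->
  'D_v (fun y => M y *m N y) x = 'D_v M x *m N x + M x *m 'D_v N x.
Proof.
move=> /derivable_mxP dM /derivable_mxP dN.
have dMN l i j : derivable (fun y => M y i l * N y l j) x v by apply: derivableM.
rewrite derive_mx; last first.
  by apply/derivable_mxP => i j; rewrite mulmx_entry_sum; apply: derivable_sum.
apply/matrixP => i j; rewrite !mxE mulmx_entry_sum derive_sum // -big_split /=.
apply: eq_bigr => l _.
rewrite (_ : (fun y => _) = (fun y => M y i l) * (fun y => N y l j)) // deriveM //.
by rewrite !derive_mx ?mxE; [rewrite /GRing.scale /= mulrC addrC [_ * N x l j]mulrC
  | apply/derivable_mxP | apply/derivable_mxP].
Qed.

Lemma derive_compE (W X : normedModType R) (g : V -> W) (h : W -> X) x v :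
  differentiable g x -> differentiable h (g x) ->
  'D_v (h \o g) x = 'D_('D_v g x) h (g x).
Proof.
move=> dg dh; rewrite deriveE; last exact: differentiable_comp.
by rewrite diff_comp // !deriveE.
Qed.

Lemma eq_derive_line (V' W : normedModType R) (G : V -> W) (H : V' -> W) x x' v v' :
  (forall h : R, G (h *: v + x) = H (h *: v' + x')) -> 'D_v G x = 'D_v' H x'.
Proof.
move=> eGH; have e0 : G x = H x' by have := eGH 0; rewrite !scale0r !add0r.
rewrite /derive; suff -> : (fun h : R => h^-1 *: ((G \o shift x) (h *: v) - G x)) =
          (fun h : R => h^-1 *: ((H \o shift x') (h *: v') - H x')) by [].
by apply/funext => h /=; rewrite eGH e0.
Qed.

End matrix_derivative.

Section jacobian.
Context {R : realType} {n : nat}.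
Implicit Types (g z uz : 'cV[R]_n -> 'cV[R]_n) (u v : 'cV[R]_n).

Lemma mulmx_jac m (g : 'cV[R]_n -> 'cV[R]_m) u v :
  differentiable g u -> jac g u *m v = 'D_v g u.
Proof.
move=> dg; rewrite deriveE // {2}(matrix_sum_delta v) linear_sum /=.
apply/matrixP => i k; rewrite (ord1 k) !mxE summxE; apply: eq_bigr => j _.
by rewrite big_ord1 linearZ /= -deriveE // !mxE mulrC.
Qed.

Lemma jac_col m (g : 'cV[R]_n -> 'cV[R]_m) u j :
  differentiable g u -> col j (jac g u) = 'D_(delta_mx j 0) g u.
Proof. by move=> dg; rewrite -mulmx_jac // colE. Qed.

Lemma jac_derive_eq m (g : 'cV[R]_n -> 'cV[R]_m) (M : 'M[R]_(m, n)) u :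
  differentiable g u -> (forall v, 'D_v g u = M *m v) -> jac g u = M.
Proof.
move=> dg DgM; apply/matrixP => i j.
by rewrite [LHS]entry_col [RHS]entry_col !colE mulmx_jac // DgM.
Qed.

Lemma jac_inverse z uz u :
  differentiable z u -> differentiable uz (z u) ->
  (\forall y \near u, uz (z y) = y) -> jac uz (z u) *m jac z u = 1%:M.
Proof.
move=> dz duz uzK; apply/matrixP => i j; rewrite [LHS]entry_col [RHS]entry_col.
rewrite [in LHS]colE -mulmxA -colE jac_col // mulmx_jac // -derive_compE //.
by rewrite (near_eq_derive _ uzK) derive_id col1.
Qed.

End jacobian.

Section symmetric_flux.
Context {R : realType} {V W : normedModType R}.
Variables (F : V -> V -> W) (f : V -> W) (u : V).
Hypothesis dF : differentiable (fun p : V * V => F p.1 p.2) (u, u).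

Lemma differentiable_pair_r : differentiable (F u) u.
Proof.
have -> : F u = (fun p : V * V => F p.1 p.2) \o (fun y => (u, y)) by [].
exact: differentiable_comp.
Qed.

(* Differentiating [F y y = f y] at the diagonal, the two partial derivatives
   of [F] agree by symmetry, so each is half of the derivative of [f]. *)
Lemma derive_symmetric_diag v :
  (\forall y \near u, F y y = f y) -> (\forall y \near u, F y u = F u y) ->
  'D_v (F u) u = 2^-1 *: 'D_v f u.
Proof.
move=> Fdiag Fsym; pose G := fun p : V * V => F p.1 p.2.
have DR : 'D_v (F u) u = 'D_(0, v) G (u, u).
  by apply: eq_derive_line => h; rewrite /G /= scaler0 add0r.
have DL : 'D_v (F ^~ u) u = 'D_(v, 0) G (u, u).
  by apply: eq_derive_line => h; rewrite /G /= scaler0 add0r.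
have Ddiag : 'D_v f u = 'D_(v, v) G (u, u).
  rewrite -(near_eq_derive _ Fdiag); exact: eq_derive_line.
have Dsplit : 'D_(v, v) G (u, u) = 'D_(v, 0) G (u, u) + 'D_(0, v) G (u, u).
  rewrite !deriveE // -linearD; congr (_ _ _).
  by rewrite [RHS](_ : _ = (v + 0, 0 + v)) // addr0 add0r.
rewrite Ddiag Dsplit -DL -DR (near_eq_derive _ Fsym) scalerDr -scalerDl.
by rewrite (_ : 2^-1 + 2^-1 = 1 :> R) ?scale1r //; lra.
Qed.

End symmetric_flux.

Arguments differentiable_pair_r {R V W F u}.
Arguments derive_symmetric_diag {R V W F f u}.

Section fluctuation_jacobian.
Context {R : realType} {n : nat}.
Variables (z uz f : 'cV[R]_n -> 'cV[R]_n) (B : 'cV[R]_n -> 'M[R]_n).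
Variables (Bm : 'cV[R]_n -> 'cV[R]_n -> 'M[R]_n)
  (fs : 'cV[R]_n -> 'cV[R]_n -> 'cV[R]_n) (u : 'cV[R]_n).
Hypotheses (df : differentiable f u) (dz : differentiable z u)
  (duz : differentiable uz (z u)) (uzK : \forall y \near u, uz (z y) = y).
Hypotheses (dBm : differentiable (fun p => Bm p.1 p.2) (u, u))
  (dfs : differentiable (fun p => fs p.1 p.2) (u, u)).
Hypotheses (fs_diag : \forall y \near u, fs y y = f y)
  (fs_sym : \forall y \near u, fs y u = fs u y).

Let Dm := Dminus z f Bm fs u.

Lemma DminusE :
  Dm = (fun y => Bm u y *m (z - cst (z u)) y) + fs u - cst (f u).
Proof. by apply/funext. Qed.

Let dBmu := differentiable_pair_r dBm.
Let dfsu := differentiable_pair_r dfs.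
Let dzc : differentiable (z - cst (z u)) u.
Proof. by apply: differentiableB => //; apply: differentiable_cst. Qed.

Lemma differentiable_Dminus_diag : differentiable Dm u.
Proof.
rewrite DminusE; apply: differentiableB; last exact: differentiable_cst.
by apply: differentiableD => //; apply: differentiable_mulmx.
Qed.

Lemma derive_Dminus_diag v : 'D_v Dm u = Bm u u *m 'D_v z u + 2^-1 *: 'D_v f u.
Proof.
have dBz : differentiable (fun y => Bm u y *m (z - cst (z u)) y) u.
  exact: differentiable_mulmx.
rewrite DminusE deriveB; last 2 first.
- exact/diff_derivable/differentiableD.
- exact: derivable_cst.
rewrite deriveD; [|exact: diff_derivable..].
rewrite derive_cst subr0 (derive_symmetric_diag dfs _ fs_diag fs_sym).
rewrite derive_mulmx; [|exact: diff_derivable..].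
rewrite deriveB; [|exact: diff_derivable|exact: derivable_cst].
rewrite derive_cst subr0 (_ : (z - cst (z u)) u = 0) ?mulmx0 ?add0r //.
exact: subrr.
Qed.

Lemma jac_Dminus_diag :
  2%:R *: Bm u u = B u *m jac uz (z u) -> jac Dm u = 2^-1 *: (jac f u + B u).
Proof.
move=> Bm_diag; apply: jac_derive_eq; first exact: differentiable_Dminus_diag.
have Bm_jac : Bm u u *m jac z u = 2^-1 *: B u.
  have -> : Bm u u = 2^-1 *: (B u *m jac uz (z u)).
    by rewrite -Bm_diag scalerA mulVf ?pnatr_eq0 // scale1r.
  by rewrite -scalemxAl -mulmxA jac_inverse // mulmx1.
move=> v; rewrite derive_Dminus_diag -!mulmx_jac // mulmxA Bm_jac.
by rewrite -!scalemxAl mulmxDl scalerDr addrC.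
Qed.

End fluctuation_jacobian.

Arguments differentiable_Dminus_diag {R n z f Bm fs u}.
Arguments jac_Dminus_diag {R n z uz f B Bm fs u}.

Section entrywise_continuity.
Context {R : realType} {T : topologicalType}.

Definition continuous_entries_at {m k} (s : T) (M : T -> 'M[R]_(m, k)) :=
  forall i j, {for s, continuous (fun t => M t i j)}.

Lemma continuous_entriesW {m k} s (M : T -> 'M[R]_(m, k)) :
  {for s, continuous M} -> continuous_entries_at s M.
Proof.
move=> cM i j; apply: (@continuous_comp _ _ _ M (fun N : 'M[R]_(m, k) => N i j)) => //.
exact: coord_continuous.
Qed.

Lemma continuous_entries_cst {m k} s (M : 'M[R]_(m, k)) :
  continuous_entries_at s (fun _ => M).
Proof. by move=> i j; apply: cst_continuous. Qed.

Lemma continuous_entries_mulmx {m p k} s (M : T -> 'M[R]_(m, p))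
    (N : T -> 'M[R]_(p, k)) :
  continuous_entries_at s M -> continuous_entries_at s N ->
  continuous_entries_at s (fun t => M t *m N t).
Proof.
move=> cM cN i j; rewrite mulmx_entry_sum.
elim/big_rec: _ => [|l G _ cG]; first exact: cst_continuous.
by apply: continuousD => //; apply: continuousM.
Qed.

Lemma continuous_entries_jac {n m} (g : 'cV[R]_n -> 'cV[R]_m) (p : T -> 'cV[R]_n) s :
  (forall v, {for p s, continuous ('D_v g)}) -> {for s, continuous p} ->
  continuous_entries_at s (fun t => jac g (p t)).
Proof.
move=> cDg cp i j.
have -> : (fun t => jac g (p t) i j) =
    (fun N : 'cV[R]_m => N i 0) \o 'D_(delta_mx j 0) g \o p.
  by apply/funext => t; rewrite /= mxE.
apply: continuous_comp => //; apply: continuous_comp; first exact: cDg.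
exact: coord_continuous.
Qed.

End entrywise_continuity.

Section integral01.
Context {R : realType}.
Implicit Types g h : R -> R.

Definition continuous01 g := forall s : R, 0 <= s <= 1 -> {for s, continuous g}.

Lemma integrable01 g : continuous01 g ->
  (@lebesgue_measure R).-integrable `[0%R, 1%R] (EFin \o g).
Proof.
move=> cg; apply: continuous_compact_integrable; first exact: segment_compact.
by apply: continuous_in_subspaceT => s; rewrite inE /= in_itv /=; apply: cg.
Qed.

Lemma eq_int01 g h : (forall s, 0 <= s <= 1 -> g s = h s) -> int01 g = int01 h.
Proof. by move=> gh; apply: eq_Rintegral => s; rewrite inE /= in_itv /=; apply: gh. Qed.

Lemma int01D g h : continuous01 g -> continuous01 h ->
  int01 (fun s => g s + h s) = int01 g + int01 h.
Proof. by move=> cg ch; rewrite /int01 RintegralD //; apply: integrable01. Qed.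

Lemma int01Mr g c : continuous01 g -> int01 (fun s => g s * c) = int01 g * c.
Proof. by move=> cg; rewrite /int01 RintegralZr //; apply: integrable01. Qed.

Lemma int01_sum p (g : 'I_p -> R -> R) : (forall k, continuous01 (g k)) ->
  int01 (fun s => \sum_(k < p) g k s) = \sum_(k < p) int01 (g k).
Proof.
move=> cg; rewrite -(fct_sumE _ _ g).
pose P (G : R -> R) (x : R) := continuous01 G /\ int01 G = x.
suff [] : P (\sum_(k < p) g k) (\sum_(k < p) int01 (g k)) by [].
apply: (big_rec2 P).
  by split; [move=> s _; apply: cst_continuous | rewrite /int01 Rintegral_cst //= mul0r].
move=> k G x _ [cG <-]; split; first by move=> s hs; apply: continuousD; [apply: cg|apply: cG].
by rewrite -(int01D _ _ (cg k) cG).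
Qed.

Definition continuous_entries01 {m k} (F : R -> 'M[R]_(m, k)) :=
  forall s : R, 0 <= s <= 1 -> continuous_entries_at s F.

Lemma eq_mint01 {m k} (F G : R -> 'M[R]_(m, k)) :
  (forall s, 0 <= s <= 1 -> F s = G s) -> mint01 F = mint01 G.
Proof.
by move=> FG; apply/matrixP => i j; rewrite !mxE; apply: eq_int01 => s /FG ->.
Qed.

Lemma mint01D {m k} (F G : R -> 'M[R]_(m, k)) :
  continuous_entries01 F -> continuous_entries01 G ->
  mint01 (fun s => F s + G s) = mint01 F + mint01 G.
Proof.
move=> cF cG; apply/matrixP => i j; rewrite !mxE -int01D.
- by apply: eq_int01 => s _; rewrite mxE.
- by move=> s /cF.
- by move=> s /cG.
Qed.

Lemma mint01_mulmxr {m p k} (F : R -> 'M[R]_(m, p)) (M : 'M[R]_(p, k)) :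
  continuous_entries01 F -> mint01 (fun s => F s *m M) = mint01 F *m M.
Proof.
move=> cF; apply/matrixP => i j; rewrite !mxE.
rewrite (@eq_int01 _ (fun s => \sum_(l < p) F s i l * M l j)); last first.
  by move=> s _; rewrite mxE.
rewrite int01_sum; last by move=> l s hs; apply: continuousM; [apply: cF | apply: cst_continuous].
by apply: eq_bigr => l _; rewrite int01Mr ?mxE // => s /cF.
Qed.

Lemma mint01_FTC {m k} (g G : R -> 'M[R]_(m, k)) :
  (forall s : R, 0 <= s <= 1 -> differentiable g s) ->
  (forall s : R, 0 < s < 1 -> 'D_1 g s = G s) -> continuous_entries01 G ->
  mint01 G = g 1 - g 0.
Proof.
move=> dg Dg cG; apply/matrixP => i j; rewrite !mxE.
pose gij := fun s : R => g s i j.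
have dgij (s : R) : 0 <= s <= 1 -> differentiable gij s.
  by move=> /dg /differentiable_mxP; apply.
have gij_oo : derivable_oo_LRcontinuous gij 0 1.
  split.
  - move=> s; rewrite in_itv /= => /andP[s0 s1].
    by apply/diff_derivable/dgij; rewrite !ltW.
  - by apply/cvg_at_right_filter/differentiable_continuous/dgij; lra.
  - by apply/cvg_at_left_filter/differentiable_continuous/dgij; lra.
have Dgij : {in `]0, 1[%R, gij^`()%classic =1 (fun s => G s i j)}.
  move=> s; rewrite in_itv /= => /andP[s0 s1].
  rewrite derive1E -Dg ?s0 // derive_mx ?mxE //.
  by apply/diff_derivable/dg; rewrite !ltW.
have cGij : {within `[0%R, 1%R], continuous (fun s => G s i j)}.
  by apply: continuous_in_subspaceT => s; rewrite inE /= in_itv /= => /cG; apply.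
by rewrite /int01 /Rintegral (continuous_FTC2 ltr01 cGij gij_oo Dgij) -EFinB.
Qed.

End integral01.

Section fluctuation_algebra.
Context {R : realType} {n : nat}.
Variables (z f : 'cV[R]_n -> 'cV[R]_n) (Bm Bp : 'cV[R]_n -> 'cV[R]_n -> 'M[R]_n)
  (fs : 'cV[R]_n -> 'cV[R]_n -> 'cV[R]_n).

Lemma dotvD (a b c : 'cV[R]_n) : dotv a (b + c) = dotv a b + dotv a c.
Proof. by rewrite /dotv -big_split; apply: eq_bigr => i _; rewrite mxE mulrDr. Qed.

Lemma dotvB (a b c : 'cV[R]_n) : dotv a (b - c) = dotv a b - dotv a c.
Proof. by rewrite /dotv -sumrB; apply: eq_bigr => i _; rewrite !mxE mulrBr. Qed.

Lemma dotvBl (a b c : 'cV[R]_n) : dotv (a - b) c = dotv a c - dotv b c.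
Proof. by rewrite /dotv -sumrB; apply: eq_bigr => i _; rewrite !mxE mulrBl. Qed.

Lemma Dminus_diag u : fs u u = f u -> Dminus z f Bm fs u u = 0.
Proof. by move=> fsu; rewrite /Dminus subrr mulmx0 add0r fsu subrr. Qed.

Lemma Dplus_diag u : fs u u = f u -> Dplus z f Bp fs u u = 0.
Proof. by move=> fsu; rewrite /Dplus subrr mulmx0 add0r fsu subrr. Qed.

Lemma Dminus_add_Dplus uL uR :
  Dminus z f Bm fs uL uR + Dplus z f Bp fs uL uR =
  (Bm uL uR + Bp uL uR) *m (z uR - z uL) + (f uR - f uL).
Proof.
rewrite /Dminus /Dplus mulmxDl.
by apply/matrixP => i j; rewrite !mxE; ring.
Qed.

Lemma Dminus_add_Dplus_swap uL uR :
  Bm uL uR = Bp uR uL -> fs uR uL = fs uL uR ->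
  Dminus z f Bm fs uL uR + Dplus z f Bp fs uR uL = 0.
Proof.
move=> BmBp fs_sym; rewrite /Dminus /Dplus -BmBp fs_sym -(opprB (z uR)) mulmxN.
by apply/matrixP => i j; rewrite !mxE; ring.
Qed.

Lemma dotv_Dminus_add_Dplus (w : 'cV[R]_n -> 'cV[R]_n) (q : 'cV[R]_n -> R) uL uR :
  (q uR - dotv (w uR) (f uR)) - (q uL - dotv (w uL) (f uL)) =
    dotv (w uR) (Bp uL uR *m (z uR - z uL))
    + dotv (w uL) (Bm uL uR *m (z uR - z uL))
    - dotv (w uR - w uL) (fs uL uR) ->
  dotv (w uL) (Dminus z f Bm fs uL uR) + dotv (w uR) (Dplus z f Bp fs uL uR) =
    q uR - q uL.
Proof. by rewrite /Dminus /Dplus !dotvB !dotvD !dotvBl; lra. Qed.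

End fluctuation_algebra.

Section zpath.
Context {R : realType} {n : nat}.
Variables (z uz : 'cV[R]_n -> 'cV[R]_n) (uL uR : 'cV[R]_n).

Let dz := z uR - z uL.
Let Phi := zpath z uz uL uR.

Lemma differentiable_zpath (s : R) :
  differentiable uz (z uL + s *: dz) -> differentiable Phi s.
Proof. by move=> duz; apply: differentiable_comp. Qed.

Lemma derive_zpath (s : R) : differentiable uz (z uL + s *: dz) ->
  'D_1 (Phi : R^o -> 'cV[R]_n) s = jac uz (z uL + s *: dz) *m dz.
Proof.
move=> duz; rewrite mulmx_jac //; apply: eq_derive_line => h.
by rewrite /Phi /zpath -/dz scalerDl addrCA [h *: _]mulr1.
Qed.

End zpath.

Section path_integral.
Context {R : realType} {n : nat}.
Variables (U Z : set 'cV[R]_n) (z uz f : 'cV[R]_n -> 'cV[R]_n)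
  (B : 'cV[R]_n -> 'M[R]_n) (uL uR : 'cV[R]_n).
Hypotheses (C1f : C1_on U f) (cB : {in U, continuous B}) (C1uz : C1_on Z uz).
Hypotheses (uzZ : forall y, Z y -> U (uz y)) (uzL : uz (z uL) = uL)
  (uzR : uz (z uR) = uR).

Let dz := z uR - z uL.
Let l (s : R) := z uL + s *: dz.
Let Phi := zpath z uz uL uR.
Hypothesis segmentZ : forall s : R, 0 <= s <= 1 -> Z (l s).

Let duz s : 0 <= s <= 1 -> differentiable uz (l s).
Proof. by move=> /segmentZ; apply: C1uz.1. Qed.

Let UPhi s : 0 <= s <= 1 -> U (Phi s).
Proof. by move=> /segmentZ; apply: uzZ. Qed.

Let cPhi s : 0 <= s <= 1 -> {for s, continuous Phi}.
Proof. by move=> /duz /differentiable_zpath /differentiable_continuous. Qed.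

Let cjac_uz : continuous_entries01 (fun s => jac uz (l s)).
Proof.
move=> s s01; apply: continuous_entries_jac; last exact/differentiable_continuous.
by move=> v; exact: C1uz.2 _ _ (segmentZ s s01).
Qed.

Let cjac_f : continuous_entries01 (fun s => jac f (Phi s)).
Proof.
move=> s s01; apply: continuous_entries_jac; last exact: cPhi.
by move=> v; exact: C1f.2 _ _ (UPhi s s01).
Qed.

Let cB_Phi : continuous_entries01 (fun s => B (Phi s)).
Proof.
move=> s s01; apply/continuous_entriesW/continuous_comp; first exact: cPhi.
by apply: cB; rewrite inE; apply: UPhi.
Qed.

Let cJf : continuous_entries01 (fun s => jac f (Phi s) *m (jac uz (l s) *m dz)).
Proof.
move=> s s01; apply: continuous_entries_mulmx; first exact: cjac_f.
by apply: continuous_entries_mulmx; [exact: cjac_uz | exact: continuous_entries_cst].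
Qed.

Lemma mint01_jac_flux_zpath :
  mint01 (fun s => jac f (Phi s) *m (jac uz (l s) *m dz)) = f uR - f uL.
Proof.
have dfPhi (s : R) : 0 <= s <= 1 -> differentiable (f \o Phi) s.
  move=> s01; apply: differentiable_comp; last exact: C1f.1 _ (UPhi s s01).
  exact/differentiable_zpath/duz.
rewrite (mint01_FTC _ _ dfPhi).
- by rewrite /= /Phi /zpath scale1r scale0r addr0 (addrC (z uL)) subrK uzL uzR.
- move=> s /andP[s0 s1]; have s01 : 0 <= s <= 1 by rewrite !ltW.
  rewrite derive_compE; [|exact/differentiable_zpath/duz|exact: C1f.1 _ (UPhi s s01)].
  by rewrite -mulmx_jac ?derive_zpath //; [exact: duz | exact: C1f.1 _ (UPhi s s01)].
- exact: cJf.
Qed.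

Lemma mint01_flux_zpath :
  mint01 (fun s => (jac f (Phi s) + B (Phi s)) *m 'D_1 (Phi : R^o -> 'cV[R]_n) s) =
  f uR - f uL + mint01 (fun s => B (Phi s) *m jac uz (l s)) *m dz.
Proof.
pose Jf s := jac f (Phi s) *m (jac uz (l s) *m dz).
pose BJ s := B (Phi s) *m jac uz (l s).
have cBJ : continuous_entries01 BJ.
  by move=> s s01; apply: continuous_entries_mulmx; [exact: cB_Phi | exact: cjac_uz].
rewrite (@eq_mint01 _ _ _ _ (fun s => Jf s + BJ s *m dz)); last first.
  move=> s s01; rewrite derive_zpath; last exact: duz.
  by rewrite mulmxDl /Jf /BJ !mulmxA.
rewrite (@mint01D _ _ _ Jf (fun s => BJ s *m dz)) /Jf.
congr (_ + _); first exact: mint01_jac_flux_zpath.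
rewrite mint01_mulmxr //.
- exact: cJf.
- by move=> s s01; apply: continuous_entries_mulmx; [exact: cBJ | exact: continuous_entries_cst].
Qed.

End path_integral.

Arguments mint01_flux_zpath {R n U Z z uz f B uL uR}.

Theorem theorem3 (R : realType) (n : nat) (U Z : set 'cV[R]_n)
  (f : 'cV[R]_n -> 'cV[R]_n) (B : 'cV[R]_n -> 'M[R]_n)
  (S : 'cV[R]_n -> R^o) (q : 'cV[R]_n -> R^o)
  (z uz : 'cV[R]_n -> 'cV[R]_n)
  (Bm Bp : 'cV[R]_n -> 'cV[R]_n -> 'M[R]_n)
  (fs : 'cV[R]_n -> 'cV[R]_n -> 'cV[R]_n) :
  (* standing assumptions on the system and the entropy pair *)
  open U ->
  C1_on U f ->
  {in U, continuous B} ->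
  strictly_convex_on U S -> C2_on U S ->
  (forall u, U u -> differentiable q u) ->
  (forall u, U u -> (grad q u)^T = (grad S u)^T *m (jac f u + B u)) ->
  (* z : U -> Z is a C^1 diffeomorphism onto the convex set Z, inverse uz *)
  z @` U = Z -> convex_set_ Z ->
  C1_on U z -> C1_on Z uz ->
  (forall u, U u -> uz (z u) = u) ->
  (forall y, Z y -> z (uz y) = y) ->
  (* hypotheses on Bbar^+- *)
  C1_on (U `*` U) (fun p => Bm p.1 p.2) ->
  C1_on (U `*` U) (fun p => Bp p.1 p.2) ->
  (forall u, U u -> 2%:R *: Bm u u = B u *m jac uz (z u)) ->
  (forall u, U u -> 2%:R *: Bp u u = B u *m jac uz (z u)) ->
  (forall uL uR, U uL -> U uR -> Bm uR uL = Bp uL uR) ->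
  (forall uL uR, U uL -> U uR ->
     Bm uL uR + Bp uL uR =
     mint01 (fun s => B (zpath z uz uL uR s) *m
                      jac uz (z uL + s *: (z uR - z uL)))) ->
  (* hypotheses on f^* *)
  C1_on (U `*` U) (fun p => fs p.1 p.2) ->
  (forall u, U u -> fs u u = f u) ->
  (forall uL uR, U uL -> U uR -> fs uL uR = fs uR uL) ->
  (forall uL uR, U uL -> U uR ->
     (q uR - dotv (grad S uR) (f uR)) - (q uL - dotv (grad S uL) (f uL)) =
     dotv (grad S uR) (Bp uL uR *m (z uR - z uL))
     + dotv (grad S uL) (Bm uL uR *m (z uR - z uL))
     - dotv (grad S uR - grad S uL) (fs uL uR)) ->
  (* conclusion: (C1)-(C5) *)
  let Dm := Dminus z f Bm fs in
  let Dp := Dplus z f Bp fs in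
  let A := fun u => jac f u + B u in
  (forall u, U u -> Dm u u = 0 /\ Dp u u = 0) /\
  (forall uL uR, U uL -> U uR ->
     Dm uL uR + Dp uL uR =
     mint01 (fun s => A (zpath z uz uL uR s) *m
                      'D_1 (zpath z uz uL uR : R^o -> 'cV[R]_n) s)) /\
  (forall uL uR, U uL -> U uR -> Dm uL uR + Dp uR uL = 0) /\
  (forall uL uR, U uL -> U uR ->
     dotv (grad S uL) (Dm uL uR) + dotv (grad S uR) (Dp uL uR) = q uR - q uL) /\
  (forall uL, U uL ->
     differentiable (Dm uL) uL /\ jac (Dm uL) uL = 2%:R^-1 *: A uL).
Proof.
move=> oU C1f cB _ _ _ _ zUZ cZ C1z C1uz uzK _ C1Bm _ Bm_diag _ BmBp Bint
  C1fs fs_diag fs_sym entropy_flux Dm Dp A.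
have zU u : U u -> Z (z u) by move=> Uu; rewrite -zUZ; exists u.
have uzZ y : Z y -> U (uz y) by rewrite -zUZ => -[u Uu <-]; rewrite uzK.
have nearU u : U u -> \forall y \near u, U y by move=> Uu; apply: open_nbhs_nbhs.
split; [|split; [|split; [|split]]].
- by move=> u Uu; rewrite /Dm /Dp Dminus_diag ?Dplus_diag //; apply: fs_diag.
- move=> uL uR UL UR; rewrite /Dm /Dp Dminus_add_Dplus Bint //.
  rewrite /A (mint01_flux_zpath C1f cB C1uz uzZ) ?uzK // => [|s s01].
    by rewrite addrC.
  by apply: cZ => //; apply: zU.
- by move=> uL uR UL UR; apply: Dminus_add_Dplus_swap; [apply: BmBp | apply: fs_sym].
- by move=> uL uR UL UR; apply: dotv_Dminus_add_Dplus; apply: entropy_flux.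
- move=> u Uu; have Uuu : (U `*` U) (u, u) by [].
  have dz := C1z.1 u Uu; have duz := C1uz.1 _ (zU u Uu).
  have uzK_near : \forall y \near u, uz (z y) = y.
    by apply: filterS (nearU u Uu) => y /uzK.
  have fs_diag_near : \forall y \near u, fs y y = f y.
    by apply: filterS (nearU u Uu) => y /fs_diag.
  have fs_sym_near : \forall y \near u, fs y u = fs u y.
    by apply: filterS (nearU u Uu) => y Uy; apply: fs_sym.
  split; first exact: differentiable_Dminus_diag (C1Bm.1 _ Uuu) (C1fs.1 _ Uuu).
  exact: jac_Dminus_diag (C1f.1 u Uu) dz duz uzK_near (C1Bm.1 _ Uuu)
    (C1fs.1 _ Uuu) fs_diag_near fs_sym_near (Bm_diag u Uu).
Qed.
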